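(* Let $\Gamma$ be a second countable locally compact abelian group, $n\ge2$, and $\omega\in\Gamma^n$ such that $K\omega_1=0$ for some positive integer $K$ and $-\omega_j\notin\Omega_{\{1\}}$ for every $j\ne1$. Let $\Omega=\{\omega_\mu:\mu\text{ a word}\}$. Then for every $\gamma\in\Gamma$ there is a neighborhood $U$ of $\gamma$ with $(U\setminus\{\gamma\})\cap\Omega=\emptyset$.
   Context: Words are finite sequences $\mu=(i_1,\ldots,i_k)$ in $\{1,\ldots,n\}$ including the empty word, and $\omega_\mu=\sum_j\omega_{i_j}$, so $\Omega$ is the (algebraic) semigroup generated by $\omega_1,\ldots,\omega_n$ together with $0$. $\Omega_{\{1\}}$ is the closed subsemigroup of $\Gamma$ generated by $\omega_1,\ldots,\omega_n$ and $-\omega_1$. *)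

From HB Require Import structures.
From mathcomp Require Import all_boot all_order all_algebra.
From mathcomp Require Import all_classical all_reals all_analysis.
Set Implicit Arguments. Unset Strict Implicit. Unset Printing Implicit Defensive.
Import Order.TTheory GRing.Theory Num.Theory.
Local Open Scope classical_set_scope.
Local Open Scope ring_scope.

(* omega : 'I_n -> G plays the role of (omega_1, ..., omega_n) in Gamma^n.
   A word mu is a finite sequence of indices; omega_mu = sum_j omega_(i_j). *)
Definition word_sum (G : zmodType) (n : nat) (omega : 'I_n -> G)
  (mu : seq 'I_n) : G := \sum_(i <- mu) omega i.

Definition Omega (G : zmodType) (n : nat) (omega : 'I_n -> G) : set G :=
  [set x | exists mu : seq 'I_n, x = word_sum omega mu].

Definition closed_subsemigroup_gen (G : topologicalZmodType) (A : set G)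
  : set G :=
  \bigcap_(S in [set S : set G | [/\ closed S, A `<=` S &
                   forall x y, S x -> S y -> S (x + y)]]) S.

(* Omega_{1}: closed subsemigroup generated by omega_1..omega_n and -omega_1,
   where i1 is the index playing the role of 1. *)
Definition Omega1 (G : topologicalZmodType) (n : nat) (omega : 'I_n -> G)
  (i1 : 'I_n) : set G :=
  closed_subsemigroup_gen (range omega `|` [set - omega i1]).

(* Let S be the closed semigroup Omega_{1}.  As S is closed and misses each
   -omega_j (j <> 1), some neighbourhood U of gamma has x - y - omega_j outside S
   for all x, y in U and j <> 1.  Since K omega_1 = 0, S contains every
   N-combination of the omega_i, and omega_nu - omega_mu - omega_j is one as soon
   as the letter counts of mu are below those of nu away from the letter 1,
   strictly at j.  So the count vectors (away from 1) of the words with value in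
   U form an antichain in N^(n-1), which is bounded (Dickson).  The count of the
   letter 1 only matters modulo K, hence U meets Omega in a finite set, which a
   T1 space lets us remove from U except for gamma. *)

From HB Require Import structures.
From mathcomp Require Import all_boot all_order all_algebra.
From mathcomp Require Import all_classical all_reals all_analysis.
Set Implicit Arguments. Unset Strict Implicit. Unset Printing Implicit Defensive.
Import Order.TTheory GRing.Theory Num.Theory.
Local Open Scope classical_set_scope.
Local Open Scope ring_scope.

Lemma fin_uniform_bound (I : finType) (P : I -> nat -> Prop) :
  (forall x B B', (B <= B')%N -> P x B -> P x B') ->
  (forall x, exists B, P x B) -> exists B, forall x, P x B.
Proof.
move=> mon /fin_all_exists [f Pf]; exists (\max_x f x) => x.
by apply: mon (Pf x); apply: leq_bigmax.
Qed.

Section Antichain.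
Variable T : finType.

Definition antichain_on (D : {set T}) (A : set (T -> nat)) :=
  forall a b, A a -> A b -> (forall i, i \in D -> a i <= b i)%N ->
  forall i, i \in D -> a i = b i.

Lemma antichain_on_fiber D A i c : antichain_on D A ->
  antichain_on (D :\ i) [set b | A b /\ b i = c].
Proof.
move=> antiA a b [Aa ai] [Ab bi] le_ab j /setD1P[_ jD].
apply: antiA => // l lD; have [->|li] := eqVneq l i; first by rewrite ai bi.
by apply: le_ab; rewrite in_setD1 li.
Qed.

(* An element b of an antichain A either agrees with a fixed a0 in A on D, or
   lies below a0 at some coordinate i, hence in one of the finitely many fibers
   {b i = c} with c < a0 i, each an antichain on a smaller index set. *)
Lemma antichain_on_bounded D A : antichain_on D A ->
  exists B, forall a, A a -> forall i, i \in D -> (a i <= B)%N.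
Proof.
move: {2}#|D| (leqnn #|D|) => k; elim: k D A => [|k IH] D A.
  rewrite leqn0 cards_eq0 => /eqP-> _; by exists 0%N => ? ? ?; rewrite inE.
move=> Dk antiA; have [[a0 Aa0]|noA] := pselect (exists a, A a); last first.
  by exists 0%N => a Aa; case: noA; exists a.
pose N := (\max_i a0 i).+1.
have a0N i : (a0 i < N)%N by rewrite ltnS leq_bigmax.
pose P (ic : T * 'I_N) B := ic.1 \in D -> forall b, A b -> b ic.1 = ic.2 ->
  forall j, j \in D :\ ic.1 -> (b j <= B)%N.
have [Bf HBf] : exists B, forall ic, P ic B.
  apply: fin_uniform_bound => [ic B B' BB' PB iD b Ab bi j jD|[i c]].
    exact: leq_trans (PB iD b Ab bi j jD) BB'.
  have [iD|niD] := boolP (i \in D); last by exists 0%N => iD; rewrite iD in niD.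
  have Dik : (#|D :\ i| <= k)%N by move: Dk; rewrite (cardsD1 i) iD.
  have [B HB] := IH _ _ Dik (antichain_on_fiber (i := i) (c := val c) antiA).
  by exists B => _ b Ab bi; apply: HB.
exists (maxn Bf N) => b Ab j jD.
have [a0_le_b|] := boolP [forall (i | i \in D), a0 i <= b i]%N.
  rewrite -(antiA _ _ Aa0 Ab _ _ jD); last exact/forall_inP.
  exact: leq_trans (ltnW (a0N j)) (leq_maxr _ _).
move=> /forall_inPn[i iD]; rewrite -ltnNge => bi_lt.
have biN : (b i < N)%N := ltn_trans bi_lt (a0N i).
have [->|ji] := eqVneq j i; first exact: leq_trans (ltnW biN) (leq_maxr _ _).
apply: leq_trans (leq_maxl _ _); apply: (HBf (i, Ordinal biN)) => //.
by rewrite in_setD1 ji.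
Qed.

End Antichain.

Section NatCombination.
Variables (G : zmodType) (I : finType) (v : I -> G).

Definition nat_comb (f : I -> nat) : G := \sum_i v i *+ f i.

Lemma nat_combD f g :
  nat_comb (fun i => f i + g i)%N = nat_comb f + nat_comb g.
Proof. by rewrite -big_split; apply: eq_bigr => i _; rewrite mulrnDr. Qed.

Lemma nat_comb_delta j : nat_comb (fun i => (i == j) : nat) = v j.
Proof.
rewrite /nat_comb (bigD1 j) //= eqxx big1 ?addr0 // => i /negbTE->.
exact: mulr0n.
Qed.

Variables (i1 : I) (K : nat).
Hypotheses (K_gt0 : (0 < K)%N) (v_i1_torsion : v i1 *+ K = 0).

Lemma nat_comb_modn f :
  nat_comb f = nat_comb (fun i => if i == i1 then f i %% K else f i)%N.
Proof.
apply: eq_bigr => i _; case: eqVneq => [->|//].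
by rewrite {1}(divn_eq (f i1) K) mulrnDr mulnC mulrnA v_i1_torsion mul0rn add0r.
Qed.

(* No condition on the i1-th coefficients: v i1 has finite order. *)
Lemma nat_comb_subr a b : (forall i, i != i1 -> a i <= b i)%N ->
  exists c, nat_comb b - nat_comb a = nat_comb c.
Proof.
move=> le_ab; pose c i := (if i == i1 then b i + a i * K.-1 else b i - a i)%N.
exists c; apply/eqP; rewrite subr_eq addrC -nat_combD; apply/eqP/eq_bigr => i _.
rewrite /c; case: eqVneq => [->|/le_ab ?]; last by rewrite subnKC.
have -> : (a i1 + (b i1 + a i1 * K.-1) = b i1 + a i1 * K)%N.
  by rewrite addnCA -{1}(muln1 (a i1)) -mulnDr add1n prednK.
by rewrite mulrnDr mulnC mulrnA v_i1_torsion mul0rn addr0.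
Qed.

End NatCombination.

Lemma word_sum_nat_comb (G : zmodType) n (omega : 'I_n -> G) mu :
  word_sum omega mu = nat_comb omega (fun i => count_mem i mu).
Proof.
rewrite /word_sum; elim: mu => [|x mu IH].
  by rewrite /nat_comb big_nil big1 // => i _.
rewrite big_cons IH -(nat_comb_delta omega x) -nat_combD.
by apply: eq_bigr => i _; rewrite eq_sym.
Qed.

Lemma subr_cst_continuous (G : topologicalZmodType) (a : G) :
  continuous (fun x : G => x - a).
Proof.
move=> x.
apply: (@continuous_comp _ _ _ (fun x => (x, a)) (fun p : G * G => p.1 - p.2)).
  exact: cvg_pair cvg_id (cvg_cst a).
exact: sub_continuous.
Qed.

Lemma nbhs_subr_notin (G : topologicalZmodType) (I : finType) (P : pred I)
    (c : I -> G) (S : set G) :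
  closed S -> (forall j, P j -> ~ S (- c j)) -> forall x0 : G,
  exists2 U, nbhs x0 U & forall x y j, U x -> U y -> P j -> ~ S (x - y - c j).
Proof.
move=> clS notS x0.
have near0 : \forall d \near (0 : G), forall j, P j -> ~ S (d - c j).
  apply: filter_forall => j; have [Pj|_] := boolP (P j); last exact: nearW.
  have nbhsC : nbhs (- c j) (~` S).
    by apply: open_nbhs_nbhs; split; [exact: closed_openC | exact: notS].
  have : nbhs 0 ((fun d => d - c j) @^-1` ~` S).
    by apply: subr_cst_continuous; rewrite sub0r.
  by apply: filterS => d.
have : nbhs (x0, x0) ((fun p : G * G => p.1 - p.2) @^-1`
    [set d | forall j, P j -> ~ S (d - c j)]).
  by apply: sub_continuous; rewrite /= subrr.
move=> [[P1 P2] /= [P1x0 P2x0] P12]; exists (P1 `&` P2); first exact: filterI.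
by move=> x y j [P1x _] [_ P2y]; apply: (P12 (x, y)).
Qed.

Lemma punctured_nbhs_finite (T : topologicalType) : accessible_space T ->
  forall (x : T) (U A : set T), nbhs x U -> finite_set (U `&` A) ->
  exists V, nbhs x V /\ (V `\ x) `&` A = set0.
Proof.
move=> accT x U A Ux finUA; pose F := (U `&` A) `\ x.
have clF : closed F := accessible_finite_set_closed.1 accT F (finite_setD _ finUA).
exists (U `&` ~` F); split.
  apply: filterI => //; apply: open_nbhs_nbhs.
  by split; [exact: closed_openC | move=> [_ /(_ erefl)]].
by apply/seteqP; split => // z [[[Uz nFz] zx] Az]; apply: nFz.
Qed.

Lemma closed_Omega1 (G : topologicalZmodType) n (omega : 'I_n -> G) i1 :
  closed (Omega1 omega i1).
Proof. by apply: closed_bigI => S []. Qed.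

Lemma Omega1_nat_comb (G : topologicalZmodType) n (omega : 'I_n -> G) i1 K :
  (0 < K)%N -> omega i1 *+ K = 0 -> forall f, Omega1 omega i1 (nat_comb omega f).
Proof.
move=> K_gt0 torsion f S [_ genS addS].
have Somega i m : S (omega i *+ m.+1).
  elim: m => [|m IH]; first by apply: genS; left; exists i.
  by rewrite mulrS; apply: addS => //; apply: genS; left; exists i.
have S0 : S 0 by rewrite -torsion -(prednK K_gt0).
by apply: (big_ind S) => // i _; case: (f i) => [|m]; rewrite ?mulr0n.
Qed.

Section Words.
Variables (G : zmodType) (n : nat) (omega : 'I_n -> G) (i1 : 'I_n) (K : nat).
Hypotheses (K_gt0 : (0 < K)%N) (omega_i1_torsion : omega i1 *+ K = 0).

Lemma word_counts_antichain (S U : set G) :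
  (forall f, S (nat_comb omega f)) ->
  (forall x y j, U x -> U y -> j != i1 -> ~ S (x - y - omega j)) ->
  antichain_on [set i | i != i1]
    [set (fun i => count_mem i mu) | mu in [set mu | U (word_sum omega mu)]].
Proof.
move=> S_comb Usep _ _ [mu Umu <-] [nu Unu <-] le_mu_nu j; rewrite inE => ji1.
apply/eqP; rewrite eqn_leq le_mu_nu ?inE //= leqNgt; apply/negP => lt_j.
have [c Ec] : exists c,
    word_sum omega nu - (word_sum omega mu + omega j) = nat_comb omega c.
  rewrite !word_sum_nat_comb -(nat_comb_delta omega j) -nat_combD.
  apply: (nat_comb_subr K_gt0 omega_i1_torsion) => i ii1.
  have [->|ij] := eqVneq i j; first by rewrite addn1.
  by rewrite addn0 le_mu_nu ?inE.
by apply: (Usep _ _ j Unu Umu ji1); rewrite -addrA -opprD Ec.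
Qed.

Lemma finite_words_near (U : set G) B :
  (forall mu, U (word_sum omega mu) ->
     forall i, i != i1 -> count_mem i mu <= B)%N ->
  finite_set (U `&` Omega omega).
Proof.
move=> bounded; pose M := (maxn B K).+1.
pose F (h : {ffun 'I_n -> 'I_M}) := nat_comb omega (fun i => h i).
apply: sub_finite_set (finite_image F (finite_finset (X := setT))).
move=> z [Uz [mu zE]]; rewrite zE in Uz *.
pose g i := if i == i1 then (count_mem i mu %% K)%N else count_mem i mu.
have gM i : (g i < M)%N.
  rewrite /g ltnS; case: eqVneq => [_|ii1].
    exact: leq_trans (ltnW (ltn_pmod _ K_gt0)) (leq_maxr _ _).
  exact: leq_trans (bounded _ Uz _ ii1) (leq_maxl _ _).
exists [ffun i => Ordinal (gM i)] => //.
rewrite word_sum_nat_comb (nat_comb_modn omega_i1_torsion).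
by apply: eq_bigr => i _; rewrite ffunE.
Qed.

End Words.

Theorem proposition5p30 (G : topologicalZmodType)
  (Hhaus : hausdorff_space G)
  (Hlc : locally_compact [set: G])
  (Hsc : @second_countable G)
  (n : nat) (Hn : (2 <= n)%N)
  (omega : 'I_n -> G) (i1 : 'I_n) (Hi1 : nat_of_ord i1 = 0%N)
  (HK : exists K : nat, (0 < K)%N /\ omega i1 *+ K = 0)
  (Hj : forall j : 'I_n, j != i1 -> ~ Omega1 omega i1 (- omega j)) :
  forall gamma : G, exists U : set G,
    nbhs gamma U /\ (U `\ gamma) `&` Omega omega = set0.
Proof.
move=> gamma; have [K [K_gt0 torsion]] := HK.
have [U Ugamma Usep] := nbhs_subr_notin (@closed_Omega1 _ _ omega i1) Hj gamma.
have [B bounded] := antichain_on_bounded (word_counts_antichain K_gt0 torsion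
  (Omega1_nat_comb K_gt0 torsion) Usep).
apply: punctured_nbhs_finite (hausdorff_accessible Hhaus) _ _ _ Ugamma _.
apply: (finite_words_near K_gt0 torsion (B := B)) => mu Umu i ii1.
by apply: (bounded (fun i => count_mem i mu)); [exists mu | rewrite inE].
Qed.
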